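(* Let $B^n$ be the open unit ball of $\mathbb{R}^n$, let $f\colon[0,1)\to[0,\infty)$ with $f(0)=1$, and suppose $\rho_M(x,y)=\dfrac{|x-y|}{f(|x|)f(|y|)}$ is a metric on $B^n$. Then $\rho_M(g(x),g(y))=\rho_M(x,y)$ for all $x,y\in B^n$ and all $g\in GM(B^n)$ if and only if $f(x)=\sqrt{1-x^2}$ for all $x\in[0,1)$.
   Context: $GM(B^n)$ denotes the group of Möbius transformations of $\overline{\mathbb{R}^n}=\mathbb{R}^n\cup\{\infty\}$ mapping $B^n$ onto itself. Convention $0/0=0$. *)

(* Euclidean space R^n = 'rV[R]_n over R : realType (the real numbers)
The extended space
   \overline{R^n} = R^n \cup {\infty} is modelled as option 'rV[R]_n,
   with None = \infty. *)
From HB Require Import structures.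
From mathcomp Require Import all_boot all_order all_algebra.
From mathcomp Require Import reals.
Set Implicit Arguments. Unset Strict Implicit. Unset Printing Implicit Defensive.
Import Order.TTheory GRing.Theory Num.Theory.
Local Open Scope ring_scope.

Section Defs.
Variables (R : realType) (n : nat).

Definition pt := 'rV[R]_n.
Definition ext := option pt.

Definition dotv (x y : pt) : R := \sum_(i < n) x 0 i * y 0 i.
Definition enorm (x : pt) : R := Num.sqrt (dotv x x).

Definition in_ball (x : pt) : Prop := enorm x < 1.

Definition hyp_refl (a : pt) (t : R) (z : ext) : ext :=
  match z with
  | None => None
  | Some x => Some (x - ((2 * (dotv x a - t)) / dotv a a) *: a)
  end.

Definition sph_refl (a : pt) (r : R) (z : ext) : ext :=
  match z with
  | None => Some a
  | Some x => if x == a then None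
              else Some (a + (r ^+ 2 / dotv (x - a) (x - a)) *: (x - a))
  end.

Definition is_reflection (s : ext -> ext) : Prop :=
  (exists a t, a != 0 /\ s = hyp_refl a t) \/
  (exists a r, 0 < r /\ s = sph_refl a r).

Inductive is_mobius : (ext -> ext) -> Prop :=
  | mob_id : is_mobius id
  | mob_comp s g : is_reflection s -> is_mobius g -> is_mobius (s \o g).

Definition GM_ball (g : ext -> ext) : Prop :=
  is_mobius g /\
  (forall x, in_ball x -> exists y, g (Some x) = Some y /\ in_ball y) /\
  (forall y, in_ball y -> exists x, in_ball x /\ g (Some x) = Some y).

(* rho_M(x,y) = |x-y| / (f(|x|) f(|y|)); in MathComp u / 0 = 0, which
   agrees with the convention 0/0 = 0. *)
Definition rhoM (f : R -> R) (x y : pt) : R :=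
  enorm (x - y) / (f (enorm x) * f (enorm y)).

Definition metric_on_ball (d : pt -> pt -> R) : Prop :=
  (forall x y, in_ball x -> in_ball y -> 0 <= d x y) /\
  (forall x y, in_ball x -> in_ball y -> (d x y = 0 <-> x = y)) /\
  (forall x y, in_ball x -> in_ball y -> d x y = d y x) /\
  (forall x y z, in_ball x -> in_ball y -> in_ball z ->
     d x z <= d x y + d y z).

End Defs.

From HB Require Import structures.
From mathcomp Require Import all_boot all_order all_algebra.
From mathcomp Require Import reals ring lra.
Import Order.TTheory GRing.Theory Num.Theory.
Local Open Scope ring_scope.
Set Implicit Arguments. Unset Strict Implicit. Unset Printing Implicit Defensive.

(* Send x in R^n to the null vector (x, (|x|^2 - 1)/2, (|x|^2 + 1)/2) of R^(n+1,1) and infinity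
   to (0, 1, 1); then <X, Y> = -|x - y|^2 / 2, and reflections in hyperplanes and spheres become
   Lorentz reflections up to positive rescalings of null vectors, so every Moebius map g lifts to
   a Lorentz isometry L.  If g preserves B^n, the adjoint of L fixes E = (0, 1, 0), the vector
   polar to the unit sphere: <emb x, L^* E> has the sign of |g x|^2 - 1, and along each axis a
   quadratic with that sign pattern forces L^* E = E.  Hence the scale-free ratio
   -<X, Y> / (2 <X, E> <Y, E>), equal to |x - y|^2 / ((1 - |x|^2)(1 - |y|^2)) on B^n, is
   GM(B^n)-invariant, and its square root is rho_M for f(t) = sqrt(1 - t^2).
   Conversely, the inversion in the sphere orthogonal to the unit sphere centred at e/s maps 0 to
   s e and -s e to t e with t = 2s/(1 + s^2); invariance of rho_M on these points and f(0) = 1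
   force f(t) = (t - s)/s = sqrt(1 - t^2). *)

Section Euclid.
Variables (R : realType) (n : nat).
Implicit Types (x y z : pt R n).

Lemma dotvC x y : dotv x y = dotv y x.
Proof. by apply: eq_bigr => i _; rewrite mulrC. Qed.

Lemma dotvDl x y z : dotv (x + y) z = dotv x z + dotv y z.
Proof. by rewrite /dotv -big_split; apply: eq_bigr => i _; rewrite mxE mulrDl. Qed.

Lemma dotvZl (k : R) x z : dotv (k *: x) z = k * dotv x z.
Proof. by rewrite /dotv mulr_sumr; apply: eq_bigr => i _; rewrite mxE mulrA. Qed.

Lemma dotvNl x z : dotv (- x) z = - dotv x z.
Proof. by rewrite -scaleN1r dotvZl mulN1r. Qed.

Lemma dotvBl x y z : dotv (x - y) z = dotv x z - dotv y z.
Proof. by rewrite dotvDl dotvNl. Qed.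

Lemma dotvDr x y z : dotv z (x + y) = dotv z x + dotv z y.
Proof. by rewrite dotvC dotvDl !(dotvC z). Qed.

Lemma dotvZr (k : R) x z : dotv z (k *: x) = k * dotv z x.
Proof. by rewrite dotvC dotvZl dotvC. Qed.

Lemma dotvNr x z : dotv z (- x) = - dotv z x.
Proof. by rewrite dotvC dotvNl dotvC. Qed.

Lemma dotvBr x y z : dotv z (x - y) = dotv z x - dotv z y.
Proof. by rewrite dotvDr dotvNr. Qed.

Lemma dotv0l z : dotv 0 z = 0.
Proof. by rewrite -(scale0r 0) dotvZl mul0r. Qed.

Lemma dotv0r z : dotv z 0 = 0.
Proof. by rewrite dotvC dotv0l. Qed.

Lemma dotv_ge0 x : 0 <= dotv x x.
Proof. by apply: sumr_ge0 => i _; rewrite -expr2 sqr_ge0. Qed.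

Lemma dotv_eq0 x : (dotv x x == 0) = (x == 0).
Proof.
apply/idP/eqP => [|->]; last by rewrite dotv0l.
rewrite /dotv psumr_eq0 => [/allP x0|i _]; last by rewrite -expr2 sqr_ge0.
apply/rowP => i; rewrite mxE; apply/eqP.
by have := x0 i (mem_index_enum i); rewrite mulf_eq0 orbb.
Qed.

Lemma dotv_gt0 x : (0 < dotv x x) = (x != 0).
Proof. by rewrite lt_def dotv_ge0 dotv_eq0 andbT. Qed.

Lemma dotv_delta_mx i x : dotv (delta_mx 0 i) x = x 0 i.
Proof.
rewrite /dotv (bigD1 i) //= big1 => [|j ji]; rewrite mxE ?eqxx ?mul1r ?addr0 //.
by rewrite (negbTE ji) mul0r.
Qed.

Lemma dotv_scale_unit (a : R) (e : pt R n) :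
  dotv e e = 1 -> dotv (a *: e) (a *: e) = a ^+ 2.
Proof. by move=> e1; rewrite dotvZl dotvZr e1 mulr1 expr2. Qed.

Lemma dotv_delta_mx_unit (i : 'I_n) : dotv (delta_mx 0 i) (delta_mx 0 i) = 1 :> R.
Proof. by rewrite dotv_delta_mx mxE !eqxx. Qed.

Lemma enorm_sqr x : enorm x ^+ 2 = dotv x x.
Proof. by rewrite sqr_sqrtr // dotv_ge0. Qed.

Lemma in_ballE x : in_ball x <-> dotv x x < 1.
Proof. by rewrite /in_ball /enorm -{1}sqrtr1 ltr_sqrt ?ltr01. Qed.

Lemma enorm_scale_unit (a : R) (e : pt R n) : dotv e e = 1 -> enorm (a *: e) = `|a|.
Proof. by move=> e1; rewrite /enorm dotv_scale_unit // sqrtr_sqr. Qed.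

Lemma in_ball_scale_unit (a : R) (e : pt R n) :
  dotv e e = 1 -> a ^+ 2 < 1 -> in_ball (a *: e).
Proof. by move=> e1 a1; rewrite in_ballE dotv_scale_unit. Qed.

End Euclid.

Section Quadratic.
Variable R : realFieldType.

Lemma quadratic_le0_const (a b c : R) :
  (forall e, 0 < e < 1 -> a * e ^+ 2 + b * e + c <= 0) -> c <= 0.
Proof.
move=> le0; rewrite leNgt; apply/negP => c_gt0.
have [a_ge0 b_ge0] := (normr_ge0 a, normr_ge0 b).
have a_ge : - `|a| <= a by exact: lerNnormlW.
have b_ge : - `|b| <= b by exact: lerNnormlW.
have M_gt0 : 0 < `|a| + `|b| + c by lra.
(* This [e] makes [|a e^2 + b e| <= (|a| + |b|) e] smaller than [c / 2]. *)
pose e := c / (2 * (`|a| + `|b| + c)).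
have eM : e * (2 * (`|a| + `|b| + c)) = c by rewrite /e divfK // gt_eqF ?mulr_gt0.
have e_gt0 : 0 < e by rewrite divr_gt0 ?mulr_gt0.
have e_lt1 : e < 1 by nra.
have := le0 e; rewrite e_gt0 e_lt1 expr2 => /(_ isT).
nra.
Qed.

Lemma quadratic_root_at1 (a b c : R) :
  (forall h, 0 < h < 1 -> a * h ^+ 2 + b * h + c <= 0) ->
  (forall h, 1 < h < 2 -> 0 <= a * h ^+ 2 + b * h + c) -> a + b + c = 0.
Proof.
move=> below above; apply/eqP; rewrite eq_le; apply/andP; split.
- apply: (@quadratic_le0_const a (- (2 * a + b))) => e /andP [e0 e1].
  have h_in : 0 < 1 - e < 1 by apply/andP; split; lra.
  by have := below _ h_in; rewrite !expr2; lra.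
- rewrite -oppr_le0; apply: (@quadratic_le0_const (- a) (- (2 * a + b))) => e /andP [e0 e1].
  have h_in : 1 < 1 + e < 2 by apply/andP; split; lra.
  by have := above _ h_in; rewrite !expr2; lra.
Qed.

End Quadratic.

Section Lorentz.
Variables (R : realType) (n : nat).
Implicit Types (x y a : pt R n) (z : ext R n) (g s : ext R n -> ext R n).

Record lvec := LVec { lv_pt : pt R n; lv_p : R; lv_q : R }.

Definition lform (X Y : lvec) : R :=
  dotv (lv_pt X) (lv_pt Y) + lv_p X * lv_p Y - lv_q X * lv_q Y.
Definition ladd (X Y : lvec) : lvec :=
  LVec (lv_pt X + lv_pt Y) (lv_p X + lv_p Y) (lv_q X + lv_q Y).
Definition lscale (k : R) (X : lvec) : lvec :=
  LVec (k *: lv_pt X) (k * lv_p X) (k * lv_q X).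
Definition lrefl (S X : lvec) : lvec :=
  ladd X (lscale (- (2 * lform X S / lform S S)) S).

Definition lisometry (L : lvec -> lvec) := forall X Y, lform (L X) (L Y) = lform X Y.
Definition ladjoint (L L' : lvec -> lvec) := forall X Y, lform (L X) Y = lform X (L' Y).

Implicit Types (X Y S T : lvec).

Lemma lformC X Y : lform X Y = lform Y X.
Proof. by rewrite /lform dotvC (mulrC (lv_p X)) (mulrC (lv_q X)). Qed.

Lemma lformDl X Y T : lform (ladd X Y) T = lform X T + lform Y T.
Proof. rewrite /lform /= dotvDl; ring. Qed.

Lemma lformZl k X T : lform (lscale k X) T = k * lform X T.
Proof. rewrite /lform /= dotvZl; ring. Qed.

Lemma lformDr X Y T : lform T (ladd X Y) = lform T X + lform T Y.
Proof. by rewrite lformC lformDl !(lformC T). Qed.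

Lemma lformZr k X T : lform T (lscale k X) = k * lform T X.
Proof. by rewrite lformC lformZl lformC. Qed.

Lemma lscale1 X : lscale 1 X = X.
Proof. by case: X => x p q; rewrite /lscale /= scale1r !mul1r. Qed.

Lemma lscaleA k l X : lscale k (lscale l X) = lscale (k * l) X.
Proof. by case: X => x p q; rewrite /lscale /= scalerA !mulrA. Qed.

Lemma lrefl_isometry S : lform S S != 0 -> lisometry (lrefl S).
Proof.
move=> SS X Y; rewrite /lrefl !(lformDl, lformDr, lformZl, lformZr).
by rewrite ?(lformC S X) ?(lformC S Y) ?(lformC Y X); field.
Qed.

Lemma lrefl_adjoint S : ladjoint (lrefl S) (lrefl S).
Proof.
move=> X Y; rewrite /lrefl !(lformDl, lformDr, lformZl, lformZr).
by rewrite ?(lformC S X) ?(lformC Y S) ?(lformC Y X); ring.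
Qed.

Lemma lreflZ S k X : lrefl S (lscale k X) = lscale k (lrefl S X).
Proof.
case: X => x p q; rewrite /lrefl /ladd /lscale /lform /= dotvZl.
by congr LVec; [apply/rowP => i; rewrite !mxE|..]; ring.
Qed.

Lemma lreflK S : lform S S != 0 -> involutive (lrefl S).
Proof.
case: S => s a b SS [x p q]; move: SS.
rewrite /lrefl /ladd /lscale /lform /= !(dotvDl, dotvZl) => SS.
by congr LVec; [apply/rowP => i; rewrite !mxE|..]; field.
Qed.

Lemma lrefl_orth S T X : lform S T = 0 -> lform (lrefl S X) T = lform X T.
Proof. by move=> ST; rewrite /lrefl lformDl lformZl ST mulr0 addr0. Qed.

Definition emb z : lvec :=
  if z is Some x then LVec x ((dotv x x - 1) / 2) ((dotv x x + 1) / 2)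
  else LVec 0 1 1.

(* The vectors polar to the unit sphere and to the sphere S(a, r): [emb x] is orthogonal to
   them exactly when x lies on that sphere. *)
Definition ball_vec : lvec := LVec 0 1 0.

Definition sph_vec a (r : R) : lvec :=
  LVec a ((dotv a a - r ^+ 2 - 1) / 2) ((dotv a a - r ^+ 2 + 1) / 2).

Definition lifts (L : lvec -> lvec) (g : ext R n -> ext R n) :=
  forall z, exists2 k, 0 < k & L (emb z) = lscale k (emb (g z)).

Lemma lform_emb x y : lform (emb (Some x)) (emb (Some y)) = - dotv (x - y) (x - y) / 2.
Proof. rewrite /lform /= !(dotvBl, dotvBr) (dotvC y x); by field. Qed.

Lemma lform_emb_inf x : lform (emb (Some x)) (emb None) = -1.
Proof. rewrite /lform /= dotv0r; by field. Qed.

Lemma lform_emb_self z : lform (emb z) (emb z) = 0.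
Proof.
case: z => [x|]; first by rewrite lform_emb subrr dotv0l oppr0 mul0r.
by rewrite /lform /= dotv0r; ring.
Qed.

Lemma lform_emb_ball_vec z :
  lform (emb z) ball_vec = if z is Some x then (dotv x x - 1) / 2 else 1.
Proof. by case: z => [x|]; rewrite /lform /= dotv0r; ring. Qed.

Lemma lform_sph_vec a r : lform (sph_vec a r) (sph_vec a r) = r ^+ 2.
Proof. rewrite /lform /=; by field. Qed.

Lemma emb_orth_eq z z' : lform (emb z) (emb z') = 0 -> z = z'.
Proof.
case: z => [x|]; case: z' => [y|] //.
- rewrite lform_emb => /eqP; rewrite mulf_eq0 oppr_eq0 invr_eq0 pnatr_eq0 orbF.
  by rewrite dotv_eq0 subr_eq0 => /eqP ->.
- by rewrite lform_emb_inf => /eqP; rewrite oppr_eq0 oner_eq0.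
- by rewrite lformC lform_emb_inf => /eqP; rewrite oppr_eq0 oner_eq0.
Qed.

Lemma emb_scale_eq k z z' : emb z = lscale k (emb z') -> z = z'.
Proof.
case: z => [x|]; case: z' => [y|] //= [ex ep eq].
- have k1 : k = 1 by lra.
  by rewrite ex k1 scale1r.
- by exfalso; clear ex; lra.
- have k0 : k = k * ((dotv y y + 1) / 2) - k * ((dotv y y - 1) / 2) by field.
  by rewrite -eq -ep subrr in k0; move: ep; rewrite k0 mul0r => /eqP; rewrite oner_eq0.
Qed.

Lemma hyp_refl_lift a t : a != 0 -> lifts (lrefl (LVec a t t)) (hyp_refl a t).
Proof.
rewrite -dotv_gt0 => /lt0r_neq0 aa z; exists 1 => //; rewrite lscale1.
rewrite /lrefl /ladd /lscale /lform /=.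
have -> : dotv a a + t * t - t * t = dotv a a by ring.
case: z => [x|] /=;
  rewrite ?(dotvDl, dotvDr, dotvBl, dotvBr, dotvNl, dotvNr, dotvZl, dotvZr, dotv0l) ?(dotvC a x);
  by congr LVec; [apply/rowP => i; rewrite !mxE|..]; field.
Qed.

Lemma sph_refl_lift a r : 0 < r -> lifts (lrefl (sph_vec a r)) (sph_refl a r).
Proof.
move=> r_gt0 z; have r0 : r != 0 by rewrite gt_eqF.
rewrite /lrefl lform_sph_vec.
case: z => [x|] /=; last first.
  exists (2 / r ^+ 2); first by rewrite divr_gt0 ?exprn_gt0.
  rewrite /ladd /lscale /lform /= !dotv0l.
  by congr LVec; [apply/rowP => i; rewrite !mxE|..]; field.
have [->|xa] := eqVneq x a.
  exists (r ^+ 2 / 2); first by rewrite divr_gt0 ?exprn_gt0.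
  rewrite /ladd /lscale /lform /=.
  by congr LVec; [apply/rowP => i; rewrite !mxE|..]; field.
have d_gt0 : 0 < dotv (x - a) (x - a) by rewrite dotv_gt0 subr_eq0.
exists (dotv (x - a) (x - a) / r ^+ 2); first by rewrite divr_gt0 ?exprn_gt0.
move: d_gt0; rewrite /ladd /lscale /lform /=.
rewrite !(dotvDl, dotvDr, dotvBl, dotvBr, dotvNl, dotvNr, dotvZl, dotvZr) (dotvC a x).
move=> /lt0r_neq0 d0.
by congr LVec; [apply/rowP => i; rewrite !mxE|..]; field; rewrite d0 r0.
Qed.

Lemma reflection_lift s : is_reflection s ->
  exists2 S, lform S S != 0 & lifts (lrefl S) s.
Proof.
case=> [[a [t [a0 ->]]]|[a [r [r_gt0 ->]]]].
  exists (LVec a t t); last exact: hyp_refl_lift.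
  by rewrite /lform /= addrK gt_eqF ?dotv_gt0.
exists (sph_vec a r); last exact: sph_refl_lift.
by rewrite lform_sph_vec expf_neq0 ?gt_eqF.
Qed.

Lemma mobius_lift g : is_mobius g ->
  exists L L', [/\ lisometry L, lisometry L', ladjoint L L' & lifts L g].
Proof.
elim=> [|s {}g s_refl _ [L [L' [L_iso L'_iso adj lift]]]].
  by exists id, id; split=> // z; exists 1; rewrite ?lscale1.
have [S SS S_lift] := reflection_lift s_refl.
exists (lrefl S \o L), (L' \o lrefl S); split=> [X Y|X Y|X Y|z] /=.
- by rewrite lrefl_isometry.
- by rewrite L'_iso lrefl_isometry.
- by rewrite lrefl_adjoint adj.
have [k k_gt0 ->] := lift z; have [k' k'_gt0 e] := S_lift (g z).
by exists (k * k'); rewrite ?mulr_gt0 // lreflZ e lscaleA.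
Qed.

Lemma mobius_inj g : is_mobius g -> injective g.
Proof.
move=> /mobius_lift [L [_ [L_iso _ _ lift]]] z z' gzz'.
apply: emb_orth_eq; have [k _ ez] := lift z; have [k' _ ez'] := lift z'.
by rewrite -L_iso ez ez' gzz' lformZl lformZr lform_emb_self !mulr0.
Qed.

End Lorentz.

Section Ball.
Variables (R : realType) (n : nat).
Implicit Types (x y c : pt R n) (g : ext R n -> ext R n) (X Y : lvec R n).

Definition GM_invariant (d : pt R n -> pt R n -> R) :=
  forall g, GM_ball g -> forall x y x' y', in_ball x -> in_ball y ->
    g (Some x) = Some x' -> g (Some y) = Some y' -> d x' y' = d x y.

Definition ball_cross x y : R :=
  dotv (x - y) (x - y) / ((1 - dotv x x) * (1 - dotv y y)).

Definition lcross X Y : R :=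
  - lform X Y / (2 * lform X (ball_vec R n) * lform Y (ball_vec R n)).

Lemma GM_ball_image g x x' : GM_ball g -> in_ball x -> g (Some x) = Some x' -> in_ball x'.
Proof. by move=> [_ [into _]] /into [y [-> y_in]] [<-]. Qed.

Lemma GM_ball_outside g x y : GM_ball g -> ~ in_ball x -> g (Some x) = Some y -> ~ in_ball y.
Proof.
move=> [g_mob [_ onto]] x_out gx /onto [x' [x'_in gx']].
by have [x'x] := mobius_inj g_mob (etrans gx' (esym gx)); apply: x_out; rewrite -x'x.
Qed.

Lemma ball_vec_char (W : lvec R n) : (0 < n)%N -> lform W W = 1 ->
  (forall x, in_ball x -> lform (emb (Some x)) W < 0) ->
  (forall x, ~ in_ball x -> 0 <= lform (emb (Some x)) W) ->
  W = ball_vec R n.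
Proof.
case: W => w p q n_gt0 WW neg nonneg.
(* Along each axis [h |-> <emb (h e_i), W>] is a quadratic that changes sign at h = 1 and at
   h = -1, so it vanishes there; this kills w and q. *)
have on_axis h i : lform (emb (Some (h *: delta_mx 0 i))) (LVec w p q) =
    (p - q) / 2 * h ^+ 2 + h * w 0 i - (p + q) / 2.
  by rewrite /lform /= dotv_scale_unit ?dotv_delta_mx_unit // dotvZl dotv_delta_mx; field.
have root i (sg : R) : sg ^+ 2 = 1 -> (p - q) / 2 + sg * w 0 i - (p + q) / 2 = 0.
  move=> sg2.
  have on_signed_axis h : (p - q) / 2 * h ^+ 2 + sg * w 0 i * h + - ((p + q) / 2) =
      lform (emb (Some ((sg * h) *: delta_mx 0 i))) (LVec w p q).
    by rewrite on_axis exprMn sg2 mul1r; ring.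
  have norm_signed_axis h : dotv ((sg * h) *: delta_mx 0 i) ((sg * h) *: delta_mx 0 i) = h ^+ 2.
    by rewrite dotv_scale_unit ?dotv_delta_mx_unit // exprMn sg2 mul1r.
  apply: quadratic_root_at1 => h /andP [h_gt0 h_lt]; rewrite on_signed_axis.
  - by apply/ltW/neg; rewrite in_ballE norm_signed_axis; nra.
  - by apply/nonneg; rewrite in_ballE norm_signed_axis; nra.
have w_q0 i : w 0 i = 0 /\ q = 0.
  by have := root i 1 (expr1n _ _); have := root i (-1) (etrans (sqrrN 1) (expr1n _ _)); lra.
have w0 : w = 0 by apply/rowP => i; rewrite mxE; case: (w_q0 i).
have q0 : q = 0 by case: (w_q0 (Ordinal n_gt0)).
subst w q; move: WW (neg 0); rewrite /lform /= !dotv0l in_ballE dotv0l ltr01.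
by move=> WW /(_ isT) p_neg; congr LVec; nra.
Qed.

Lemma GM_ball_adjoint_fixes_ball_vec g L L' : (0 < n)%N -> GM_ball g ->
  lisometry L' -> ladjoint L L' -> lifts L g -> L' (ball_vec R n) = ball_vec R n.
Proof.
move=> n_gt0 gGM L'_iso adj lift.
have pairing z : exists2 k, 0 < k &
    lform (emb z) (L' (ball_vec R n)) = k * lform (emb (g z)) (ball_vec R n).
  by have [k k_gt0 e] := lift z; exists k; rewrite // -adj e lformZl.
apply: ball_vec_char => // [|x x_in|x x_out].
- by rewrite L'_iso /lform /= dotv0l; ring.
- have [k k_gt0 ->] := pairing (Some x); have [y [-> /in_ballE y_in]] := gGM.2.1 x x_in.
  by rewrite lform_emb_ball_vec pmulr_rlt0 //; lra.
have [k k_gt0 ->] := pairing (Some x).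
case gx: (g (Some x)) => [y|]; rewrite lform_emb_ball_vec; last by rewrite mulr1 ltW.
have := GM_ball_outside gGM x_out gx; rewrite in_ballE => /negP; rewrite -leNgt => y_out.
by rewrite pmulr_rge0 //; lra.
Qed.

Lemma lcrossZ k k' X Y : k != 0 -> k' != 0 ->
  lcross (lscale k X) (lscale k' Y) = lcross X Y.
Proof.
move=> k0 k'0; rewrite /lcross !(lformZl, lformZr) mulrA -mulrN.
have -> : 2 * (k * lform X (ball_vec R n)) * (k' * lform Y (ball_vec R n)) =
          (k * k') * (2 * lform X (ball_vec R n) * lform Y (ball_vec R n)) by ring.
by rewrite invfM mulrACA mulfV ?mul1r ?mulf_neq0.
Qed.

Lemma ball_cross_emb x y : in_ball x -> in_ball y ->
  ball_cross x y = lcross (emb (Some x)) (emb (Some y)).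
Proof.
move=> /in_ballE x_in /in_ballE y_in.
rewrite /ball_cross /lcross lform_emb !lform_emb_ball_vec.
by field; rewrite !subr_eq0 (lt_eqF x_in) (lt_eqF y_in) (gt_eqF x_in) (gt_eqF y_in).
Qed.

Lemma GM_ball_cross : (0 < n)%N -> GM_invariant ball_cross.
Proof.
move=> n_gt0 g gGM x y x' y' x_in y_in gx gy.
have [L [L' [L_iso L'_iso adj lift]]] := mobius_lift gGM.1.
have L'E := GM_ball_adjoint_fixes_ball_vec n_gt0 gGM L'_iso adj lift.
have [kx kx_gt0 ex] := lift (Some x); have [ky ky_gt0 ey] := lift (Some y).
rewrite gx in ex; rewrite gy in ey.
have x'_in := GM_ball_image gGM x_in gx; have y'_in := GM_ball_image gGM y_in gy.
rewrite !ball_cross_emb //.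
by rewrite -(lcrossZ _ _ (lt0r_neq0 kx_gt0) (lt0r_neq0 ky_gt0)) -ex -ey /lcross L_iso !adj L'E.
Qed.

Lemma sph_refl_invol c r : 0 < r -> involutive (sph_refl c r).
Proof.
move=> r_gt0 z; have lift := sph_refl_lift c r_gt0.
have SS : lform (sph_vec c r) (sph_vec c r) != 0 by rewrite lform_sph_vec expf_neq0 ?gt_eqF.
have [k _ e] := lift z; have [k' _ e'] := lift (sph_refl c r z).
apply/esym/(@emb_scale_eq _ _ (k * k')).
by rewrite -lscaleA -e' -lreflZ -e lreflK.
Qed.

Lemma sph_refl_ball c r x : r ^+ 2 = dotv c c - 1 -> 0 < r -> in_ball x ->
  exists y, sph_refl c r (Some x) = Some y /\ in_ball y.
Proof.
move=> r2 r_gt0 /in_ballE x_in.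
have orth : lform (sph_vec c r) (ball_vec R n) = 0 by rewrite /lform /= dotv0r r2; field.
have [k k_gt0 e] := sph_refl_lift c r_gt0 (Some x).
have := lrefl_orth (emb (Some x)) orth; rewrite e lformZl !lform_emb_ball_vec.
case: (sph_refl c r (Some x)) => [y|] E; last by nra.
by exists y; split => //; apply/in_ballE; nra.
Qed.

Lemma sph_refl_GM c r : r ^+ 2 = dotv c c - 1 -> 0 < r -> GM_ball (sph_refl c r \o id).
Proof.
move=> r2 r_gt0; split; [|split].
- by apply: mob_comp; [right; exists c, r | exact: mob_id].
- by move=> x; apply: sph_refl_ball.
move=> y /(sph_refl_ball r2 r_gt0) [x [e x_in]]; exists x; split => //.
by rewrite -e; exact: sph_refl_invol.
Qed.

End Ball.

Section HalfAngle.
Variable R : rcfType.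

Lemma half_angle_surj (t : R) : 0 < t < 1 ->
  exists2 s, 0 < s < 1 & t = 2 * s / (1 + s ^+ 2).
Proof.
move=> /andP [t_gt0 t_lt1].
pose c := Num.sqrt (1 - t ^+ 2).
have c2 : t ^+ 2 = 1 - c ^+ 2 by rewrite sqr_sqrtr ?subKr // subr_ge0 expr2; nra.
have c_ge0 : 0 <= c by exact: sqrtr_ge0.
have c1_gt0 : 0 < 1 + c by lra.
exists (t / (1 + c)).
  by rewrite divr_gt0 // ltr_pdivrMr // mul1r; apply/andP; split; lra.
have -> : 1 + (t / (1 + c)) ^+ 2 = 2 / (1 + c).
  by rewrite expr_div_n c2; field; rewrite gt_eqF.
by field; rewrite gt_eqF.
Qed.

Lemma sqrt_one_sub_half_angle (s : R) : 0 <= s <= 1 ->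
  Num.sqrt (1 - (2 * s / (1 + s ^+ 2)) ^+ 2) = (1 - s ^+ 2) / (1 + s ^+ 2).
Proof.
move=> /andP [s_ge0 s_le1].
have s2_gt0 : 0 < 1 + s ^+ 2 by rewrite expr2; nra.
have -> : 1 - (2 * s / (1 + s ^+ 2)) ^+ 2 = ((1 - s ^+ 2) / (1 + s ^+ 2)) ^+ 2.
  by field; rewrite gt_eqF.
have s2_le1 : s ^+ 2 <= 1 by rewrite expr2; nra.
have q_ge0 : 0 <= (1 - s ^+ 2) / (1 + s ^+ 2) by apply: divr_ge0; [rewrite subr_ge0 | exact: ltW].
by rewrite sqrtr_sqr ger0_norm.
Qed.

End HalfAngle.

Section RhoM.
Variables (R : realType) (n : nat).
Implicit Types (f : R -> R) (x y e : pt R n).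

Lemma rhoM_sqrt_ball_cross f x y :
  (forall t, 0 <= t < 1 -> f t = Num.sqrt (1 - t ^+ 2)) -> in_ball x -> in_ball y ->
  rhoM f x y = Num.sqrt (ball_cross x y).
Proof.
move=> fE x_in y_in.
have f_enorm (u : pt R n) : in_ball u -> f (enorm u) = Num.sqrt (1 - dotv u u).
  by move=> u_in; rewrite fE ?enorm_sqr // sqrtr_ge0.
rewrite /rhoM /ball_cross !f_enorm //.
have x_ge0 : 0 <= 1 - dotv x x by move/in_ballE: x_in; rewrite subr_ge0 => /ltW.
have y_ge0 : 0 <= 1 - dotv y y by move/in_ballE: y_in; rewrite subr_ge0 => /ltW.
by rewrite /enorm sqrtrM ?dotv_ge0 // sqrtrV ?mulr_ge0 // sqrtrM.
Qed.

Lemma sph_refl_line e (c r k : R) : dotv e e = 1 -> k != c ->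
  sph_refl (c *: e) r (Some (k *: e)) = Some ((c + r ^+ 2 / (k - c)) *: e).
Proof.
move=> e1 kc; rewrite /sph_refl; case: eqP => [/eqP|_].
  rewrite -subr_eq0 -scalerBl -dotv_eq0 dotv_scale_unit // sqrf_eq0 subr_eq0.
  by rewrite (negbTE kc).
rewrite -scalerBl dotv_scale_unit // scalerA -scalerDl.
by congr (Some (_ *: _)); field; rewrite subr_eq0.
Qed.

Lemma rhoM_line f e (a b : R) : dotv e e = 1 ->
  rhoM f (a *: e) (b *: e) = `|a - b| / (f `|a| * f `|b|).
Proof. by move=> e1; rewrite /rhoM -scalerBl !enorm_scale_unit. Qed.

Lemma metric_rhoM_f_neq0 f (a : R) : (0 < n)%N ->
  metric_on_ball (rhoM (n := n) f) -> 0 < a < 1 -> f a != 0.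
Proof.
move=> n_gt0 [_ [sep _]] /andP [a_gt0 a_lt1].
pose e : pt R n := delta_mx 0 (Ordinal n_gt0).
have e1 : dotv e e = 1 by exact: dotv_delta_mx_unit.
have a_in : in_ball (a *: e) by apply: in_ball_scale_unit; rewrite // expr2; nra.
have o_in : in_ball (0 *: e) by apply: in_ball_scale_unit; rewrite // expr2 mul0r.
(* Otherwise, as [u / 0 = 0], the distinct points [a e] and [0] would be at distance 0. *)
apply/eqP => fa0; have := (sep _ _ a_in o_in).1.
rewrite rhoM_line // subr0 gtr0_norm // fa0 mul0r invr0 mulr0 => /(_ erefl).
move=> /(congr1 (fun v => dotv v e)); rewrite !dotvZl e1 !mulr1 => a0.
by rewrite a0 ltxx in a_gt0.
Qed.

Lemma GM_ball_half_angle_map e s : dotv e e = 1 -> 0 < s < 1 ->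
  exists g, [/\ GM_ball g, g (Some (0 *: e)) = Some (s *: e)
    & g (Some ((- s) *: e)) = Some ((2 * s / (1 + s ^+ 2)) *: e)].
Proof.
move=> e1 /andP [s_gt0 s_lt1]; have s0 : s != 0 by rewrite gt_eqF.
(* The inversion in the sphere orthogonal to the unit sphere centred at [e / s];
   on the line through [e] it acts as [h |-> (s - h) / (1 - s h)]. *)
pose r := Num.sqrt (s ^- 2 - 1).
have s2_gt1 : 1 < s ^- 2 by rewrite invf_gt1 ?exprn_gt0 // expr2; nra.
have r2 : r ^+ 2 = s ^- 2 - 1 by rewrite sqr_sqrtr // subr_ge0 ltW.
have r_gt0 : 0 < r by rewrite sqrtr_gt0 subr_gt0.
have g0 : sph_refl (s^-1 *: e) r (Some (0 *: e)) = Some (s *: e).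
  rewrite sph_refl_line // ?r2; last by rewrite eq_sym invr_eq0.
  by congr (Some (_ *: _)); field.
have gs : sph_refl (s^-1 *: e) r (Some ((- s) *: e)) = Some ((2 * s / (1 + s ^+ 2)) *: e).
  rewrite sph_refl_line // ?r2; last first.
    by apply/eqP => /(congr1 (fun v => v * s)); rewrite mulVf //; nra.
  by congr (Some (_ *: _)); field; rewrite s0 gt_eqF //=; nra.
exists (sph_refl (s^-1 *: e) r \o id); split; [|exact: g0|exact: gs].
by apply: sph_refl_GM; rewrite // dotv_scale_unit // r2 exprVn.
Qed.

Lemma GM_invariant_rhoM_half_angle f s : (0 < n)%N -> f 0 = 1 ->
  metric_on_ball (rhoM (n := n) f) -> GM_invariant (rhoM (n := n) f) -> 0 < s < 1 ->
  f (2 * s / (1 + s ^+ 2)) = (1 - s ^+ 2) / (1 + s ^+ 2).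
Proof.
move=> n_gt0 f0 metric inv s01; have [s_gt0 s_lt1] := andP s01.
pose e : pt R n := delta_mx 0 (Ordinal n_gt0).
have e1 : dotv e e = 1 by exact: dotv_delta_mx_unit.
have [g [gGM g0 gs]] := GM_ball_half_angle_map e1 s01.
have s2_gt0 : 0 < 1 + s ^+ 2 by rewrite expr2; nra.
pose t := 2 * s / (1 + s ^+ 2); rewrite -/t in gs *.
have s_lt_t : s < t by rewrite /t ltr_pdivlMr // !expr2; nra.
have t_lt1 : t < 1 by rewrite /t ltr_pdivrMr // mul1r !expr2; nra.
have fs0 : f s != 0 by apply: metric_rhoM_f_neq0.
have ft0 : f t != 0 by apply: metric_rhoM_f_neq0 => //; apply/andP; split; lra.
have ms_in : in_ball ((- s) *: e) by apply: in_ball_scale_unit; rewrite // sqrrN expr2; nra.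
have o_in : in_ball (0 *: e) by apply: in_ball_scale_unit; rewrite // expr2 mul0r.
have := inv _ gGM _ _ _ _ ms_in o_in gs g0.
rewrite !rhoM_line // subr0 normrN normr0 f0 mulr1 !gtr0_norm ?subr_gt0 //; last by lra.
move/eqP; rewrite eqr_div ?mulf_neq0 // => /eqP cross.
have sft : s * f t = t - s by apply: (mulIf fs0); rewrite -mulrA -cross.
have -> : f t = (t - s) / s by rewrite -sft mulrC mulKf ?gt_eqF.
by rewrite /t; field; rewrite !gt_eqF.
Qed.

End RhoM.

Theorem lemma6p2 (R : realType) (n : nat) (f : R -> R) :
  (0 < n)%N ->
  (forall t : R, 0 <= t < 1 -> 0 <= f t) ->
  f 0 = 1 ->
  metric_on_ball (rhoM (n := n) f) ->
  ((forall g : ext R n -> ext R n, GM_ball g ->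
      forall x y x' y' : pt R n, in_ball x -> in_ball y ->
        g (Some x) = Some x' -> g (Some y) = Some y' ->
        rhoM f x' y' = rhoM f x y)
   <-> (forall t : R, 0 <= t < 1 -> f t = Num.sqrt (1 - t ^+ 2))).
Proof.
move=> n_gt0 _ f0 metric; split=> [inv t /andP [t_ge0 t_lt1] | fE].
  have [->|t_neq0] := eqVneq t 0; first by rewrite f0 expr2 mul0r subr0 sqrtr1.
  have t01 : 0 < t < 1 by rewrite lt_def t_neq0 t_ge0 t_lt1.
  have [s s01 ->] := half_angle_surj t01; have [s_gt0 s_lt1] := andP s01.
  rewrite (GM_invariant_rhoM_half_angle n_gt0 f0 metric inv s01).
  by rewrite sqrt_one_sub_half_angle // !ltW.
move=> g gGM x y x' y' x_in y_in gx gy.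
have x'_in := GM_ball_image gGM x_in gx; have y'_in := GM_ball_image gGM y_in gy.
by rewrite !rhoM_sqrt_ball_cross // (GM_ball_cross n_gt0 gGM x_in y_in gx gy).
Qed.
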